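(* Let $L'$ and $L''$ be languages over $\Sigma$ that satisfy the partial order condition. Then $L=L'\cap L''$ also satisfies the partial order condition.
   Context: A DFA $(Q,\Sigma,\delta,q_0,F)$ (with $\delta$ extended to strings) satisfies the partial order condition if there do not exist two distinguishable states $q_1,q_2\in Q$ and strings $x,y\in\Sigma^+$ with $\delta(q_1,x)=\delta(q_2,x)=q_2$ and $\delta(q_2,y)=q_1$; here $q_1,q_2$ are distinguishable if there is $z\in\Sigma^*$ such that exactly one of $\delta(q_1,z),\delta(q_2,z)$ lies in $F$. A (regular) language satisfies the partial order condition if its minimal DFA does. *)

From HB Require Import structures.
From mathcomp Require Import all_boot.
Set Implicit Arguments. Unset Strict Implicit. Unset Printing Implicit Defensive.

Definition language (Sigma : finType) := seq Sigma -> Prop.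

Record dfa (Sigma : finType) := Dfa {
  state : finType;
  delta : state -> Sigma -> state;
  start : state;
  final : {set state}
}.

Arguments start {Sigma} d.
Arguments final {Sigma} d.
Arguments delta {Sigma} d.
Definition delta_star {Sigma : finType} (A : dfa Sigma) (q : state A) (w : seq Sigma)
  : state A := foldl (delta A) q w.
Arguments delta_star {Sigma} A q w.

Definition accepts (Sigma : finType) (A : dfa Sigma) (w : seq Sigma) : Prop :=
  delta_star A (start A) w \in final A.

Definition recognizes (Sigma : finType) (A : dfa Sigma) (L : language Sigma) : Prop :=
  forall w, L w <-> accepts A w.

Definition regular (Sigma : finType) (L : language Sigma) : Prop :=
  exists A : dfa Sigma, recognizes A L.

Definition minimal_dfa (Sigma : finType) (A : dfa Sigma) (L : language Sigma) : Prop :=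
  recognizes A L /\
  forall B : dfa Sigma, recognizes B L -> #|state A| <= #|state B|.

Definition distinguishable {Sigma : finType} (A : dfa Sigma) (q1 q2 : state A) : Prop :=
  exists z : seq Sigma,
    (delta_star A q1 z \in final A) != (delta_star A q2 z \in final A).
Arguments distinguishable {Sigma} A q1 q2.

Definition dfa_poc (Sigma : finType) (A : dfa Sigma) : Prop :=
  ~ exists (q1 q2 : state A) (x y : seq Sigma),
      distinguishable A q1 q2 /\ x != [::] /\ y != [::] /\
      delta_star A q1 x = q2 /\ delta_star A q2 x = q2 /\
      delta_star A q2 y = q1.

(* A (regular) language satisfies the partial order condition if its minimal
   DFA does (minimal DFAs are unique up to isomorphism; we require it of
   every minimal DFA). *)
Definition lang_poc (Sigma : finType) (L : language Sigma) : Prop :=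
  regular L /\ forall A : dfa Sigma, minimal_dfa A L -> dfa_poc A.

Definition lang_inter (Sigma : finType) (L1 L2 : language Sigma) : language Sigma :=
  fun w => L1 w /\ L2 w.

From mathcomp Require Import all_boot.
From mathcomp Require Import boolp.

Set Implicit Arguments. Unset Strict Implicit. Unset Printing Implicit Defensive.

(* Suppose the minimal DFA A of L' \cap L'' has a forbidden pattern
   q1 -x-> q2 -x-> q2 -y-> q1, with q1 reached by u and q1, q2 separated by z.
   The product P of the minimal DFAs of L' and L'' also recognizes L' \cap L''.
   Pick a power X of x acting idempotently on the states of P, then a power
   G = (X y)^k acting idempotently on P.  In A, the words u G and u G X still lead
   to q1 and q2; in P they lead to states p1, p2 with p2 X = p2 and
   p2 y (X y)^(k-1) = p1 G = p1, and z separates p1 and p2 because A and P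
   accept the same words.  A forbidden pattern of a product projects to one of
   the factors, contradicting its partial order condition. *)

Lemma iter_collision (T : finType) (f : T -> T) :
  exists i j, i < j /\ forall t, iter i f t = iter j f t.
Proof.
pose fpow (i : 'I_#|{ffun T -> T}|.+1) := [ffun t => iter i f t].
have /injectivePn [i [j neq_ij eq_ij]] : ~~ injectiveb fpow.
  by apply/negP => /injectiveP/leq_card; rewrite card_ord ltnn.
have {}eq_ij t : iter i f t = iter j f t.
  by have := congr1 (fun g : {ffun T -> T} => g t) eq_ij; rewrite !ffunE.
case: (ltngtP i j) => [lt_ij|lt_ji|eq_val_ij].
- by exists i, j.
- by exists j, i; split => // t; rewrite eq_ij.
- by rewrite -val_eqE /= eq_val_ij eqxx in neq_ij.
Qed.

Lemma iter_idempotent (T : finType) (f : T -> T) :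
  exists n, forall t, iter n.+1 f (iter n.+1 f t) = iter n.+1 f t.
Proof.
have [i [j [lt_ij eq_ij]]] := iter_collision f.
have period k t : i <= k -> iter (k + (j - i)) f t = iter k f t.
  move=> le_ik; rewrite -(subnK le_ik) -addnA subnKC ?(ltnW lt_ij) //.
  by rewrite !iterD eq_ij.
have periodM l k t : i <= k -> iter (k + l * (j - i)) f t = iter k f t.
  move=> le_ik; elim: l => [|l IHl]; first by rewrite addn0.
  by rewrite mulSn addnCA addnC period ?IHl // (leq_trans le_ik) ?leq_addr.
exists (i.+1 * (j - i)).-1 => t.
rewrite prednK ?muln_gt0 ?subn_gt0 // -iterD periodM //.
by rewrite (leq_trans (leqnSn i)) // leq_pmulr // subn_gt0.
Qed.

Section Automata.
Variable Sigma : finType.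
Implicit Types (A B : dfa Sigma) (L : language Sigma) (u w x y z : seq Sigma).

Definition wpow w n := iter n (cat w) [::].

Lemma delta_star_cat A q w1 w2 :
  delta_star A q (w1 ++ w2) = delta_star A (delta_star A q w1) w2.
Proof. exact: foldl_cat. Qed.

Lemma delta_star_wpow A q w n :
  delta_star A q (wpow w n) = iter n (delta_star A ^~ w) q.
Proof. by elim: n q => [|n IHn] q //=; rewrite delta_star_cat IHn -iterSr. Qed.

Lemma idempotent_wpow A w :
  exists n, forall q,
    delta_star A (delta_star A q (wpow w n.+1)) (wpow w n.+1) =
    delta_star A q (wpow w n.+1).
Proof.
have [n idem] := iter_idempotent (delta_star A ^~ w).
by exists n => q; rewrite !delta_star_wpow idem.
Qed.

Lemma recognizes_accepts_eq A B L w :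
  recognizes A L -> recognizes B L ->
  (delta_star A (start A) w \in final A) = (delta_star B (start B) w \in final B).
Proof. by move=> rA rB; apply/idP/idP => [/rA/rB|/rB/rA]. Qed.

Definition reachable A (q : state A) : bool :=
  `[< exists u, delta_star A (start A) u = q >].

Lemma reachableP A (q : state A) :
  reflect (exists u, delta_star A (start A) u = q) (reachable q).
Proof. exact: asboolP. Qed.

Lemma reachable_start A : reachable (start A).
Proof. by apply/reachableP; exists [::]. Qed.

Lemma reachable_delta A (q : state A) a : reachable q -> reachable (delta A q a).
Proof.
by case/reachableP => u reach_q; apply/reachableP; exists (rcons u a);
   rewrite -cats1 delta_star_cat reach_q.
Qed.

Definition reachable_part A : dfa Sigma :=
  @Dfa Sigma {q : state A | reachable q}
    (fun q a => exist _ (delta A (val q) a) (reachable_delta a (valP q)))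
    (exist _ (start A) (reachable_start A))
    [set q | val q \in final A].

Lemma delta_star_reachable_part A q w :
  val (delta_star (reachable_part A) q w) = delta_star A (val q) w.
Proof. by elim: w q => [|a w IHw] q //=; rewrite [LHS]IHw. Qed.

Lemma reachable_part_recognizes A L :
  recognizes A L -> recognizes (reachable_part A) L.
Proof. by move=> rA w; rewrite rA /accepts inE delta_star_reachable_part. Qed.

Lemma minimal_dfa_reachable A L (q : state A) : minimal_dfa A L -> reachable q.
Proof.
move=> [rA minA]; apply: contraT => unreachable_q.
have lt_reachable : #|[pred p : state A | reachable p]| < #|state A|.
  by apply: proper_card; apply/properP; split; [apply/subsetP | exists q].
have := minA _ (reachable_part_recognizes rA).
by rewrite /= card_sig leqNgt lt_reachable.
Qed.

Lemma exists_minimal_dfa L : regular L -> exists A, minimal_dfa A L.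
Proof.
move=> [B rB].
have ex_size : exists n, `[< exists A, recognizes A L /\ #|state A| = n >].
  by exists #|state B|; apply/asboolP; exists B.
case: (ex_minnP ex_size) => _ /asboolP [A [rA <-]] minA.
by exists A; split=> // C rC; apply: minA; apply/asboolP; exists C.
Qed.

Definition prod_dfa A1 A2 : dfa Sigma :=
  @Dfa Sigma (state A1 * state A2)%type
    (fun p a => (delta A1 p.1 a, delta A2 p.2 a)) (start A1, start A2)
    [set p | (p.1 \in final A1) && (p.2 \in final A2)].

Lemma delta_star_prod A1 A2 p w :
  delta_star (prod_dfa A1 A2) p w = (delta_star A1 p.1 w, delta_star A2 p.2 w).
Proof. by elim: w p => [|a w IHw] [p1 p2] //=; rewrite [LHS]IHw. Qed.

Lemma prod_dfa_recognizes A1 A2 L1 L2 :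
  recognizes A1 L1 -> recognizes A2 L2 ->
  recognizes (prod_dfa A1 A2) (lang_inter L1 L2).
Proof.
move=> r1 r2 w; rewrite /accepts delta_star_prod inE /=.
by split=> [[/r1 -> /r2 ->] | /andP[/r1 ? /r2 ?]].
Qed.

Definition forbidden_pattern A (q1 q2 : state A) x y : Prop :=
  distinguishable A q1 q2 /\ x != [::] /\ y != [::] /\
  delta_star A q1 x = q2 /\ delta_star A q2 x = q2 /\ delta_star A q2 y = q1.
Arguments forbidden_pattern : clear implicits.

Lemma distinguishable_prod A1 A2 (p r : state (prod_dfa A1 A2)) :
  distinguishable _ p r -> distinguishable A1 p.1 r.1 \/ distinguishable A2 p.2 r.2.
Proof.
case=> z; rewrite !delta_star_prod !inE /=.
case: (delta_star A1 p.1 z \in final A1 =P (delta_star A1 r.1 z \in final A1))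
  => [eq1|/eqP neq1]; last by left; exists z.
by rewrite eq1 => neq2; right; exists z; apply: contra neq2 => /eqP ->.
Qed.

Lemma dfa_poc_prod A1 A2 : dfa_poc A1 -> dfa_poc A2 -> dfa_poc (prod_dfa A1 A2).
Proof.
move=> poc1 poc2 [[p1 p2] [[r1 r2] [x [y [/distinguishable_prod dist [nx [ny]]]]]]].
rewrite !delta_star_prod /= => -[[px1 px2] [[rx1 rx2] [ry1 ry2]]].
case: dist => dist; [apply: poc1; exists p1, r1 | apply: poc2; exists p2, r2];
  by exists x, y.
Qed.

Lemma forbidden_pattern_transfer A B L q1 q2 x y u :
  recognizes A L -> recognizes B L -> delta_star A (start A) u = q1 ->
  forbidden_pattern A q1 q2 x y ->
  exists p1 p2 x' y', forbidden_pattern B p1 p2 x' y'.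
Proof.
move=> rA rB reach_q1 [[z dist_z] [nx [ny [q1x [q2x q2y]]]]].
have [n idemX] := idempotent_wpow B x; set X := wpow x n.+1 in idemX *.
have [m idemG] := idempotent_wpow B (X ++ y); set G := wpow _ m.+1 in idemG *.
have q1X : delta_star A q1 X = q2.
  by rewrite delta_star_cat q1x delta_star_wpow iter_fix.
have q1G : delta_star A q1 G = q1.
  by rewrite delta_star_wpow iter_fix // delta_star_cat q1X.
set p1 := delta_star B (delta_star B (start B) u) G.
exists p1, (delta_star B p1 X), X, (y ++ wpow (X ++ y) m).
split; last split; last split; last split; last split.
- exists z; rewrite -!delta_star_cat -!(recognizes_accepts_eq _ rA rB).
  by rewrite !(delta_star_cat _ u) !(delta_star_cat _ G) (delta_star_cat _ X)
             reach_q1 q1G q1X.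
- by rewrite /X /=; case: (x) nx.
- by case: (y) ny.
- by [].
- exact: idemX.
- by rewrite -delta_star_cat catA; apply: idemG.
Qed.

End Automata.

Theorem lemma4p5 (Sigma : finType) (L' L'' : language Sigma) :
  lang_poc L' -> lang_poc L'' -> lang_poc (lang_inter L' L'').
Proof.
move=> [reg1 poc1] [reg2 poc2].
have [A1 min1] := exists_minimal_dfa reg1.
have [A2 min2] := exists_minimal_dfa reg2.
have r12 := prod_dfa_recognizes min1.1 min2.1.
split=> [|A minA [q1 [q2 [x [y pattern]]]]]; first by exists (prod_dfa A1 A2).
have /reachableP [u reach_q1] := minimal_dfa_reachable q1 minA.
have [p1 [p2 [x' [y' pattern']]]] :=
  forbidden_pattern_transfer minA.1 r12 reach_q1 pattern.
by apply: dfa_poc_prod (poc1 _ min1) (poc2 _ min2) _; exists p1, p2, x', y'.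
Qed.
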